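(* Let $K:[0,\infty)\to(0,\infty)$ be non-increasing with $K(0)=1$, and for $\sigma>0$ let $K_\sigma(x)=K(x/\sigma)$. Let $\mathcal{X}=\{\mathbf{x}_1,\dots,\mathbf{x}_n\}\subset\mathbb{R}^d$ and let $\mathcal{C}_1,\dots,\mathcal{C}_k$ be a partition of $\mathcal{X}$ into nonempty sets. For each $l\in[k]$, suppose $\mathcal{C}_l$ is connected at distance $\delta_l$. Let $\mathbf{U}\in\mathbb{R}^{n\times n}$ have as columns the eigenvectors of the normalised Laplacian $\mathbf{L}_{\mathrm{N}}$ of the graph $\mathcal{G}=(\mathcal{X},K_\sigma)$, and let $\mathbf{D}$ be the corresponding degree matrix. Then for each $i,j\in[n]$, $l\in[k]$ with $\mathbf{x}_i,\mathbf{x}_j\in\mathcal{C}_l$, $$\|\mathbf{D}_{ii}^{-1/2}\mathbf{U}_{i,1:k}-\mathbf{D}_{jj}^{-1/2}\mathbf{U}_{j,1:k}\|\le \max_{m\in[k]} n^{1.5}k^{0.5}\sqrt{\frac{K_\sigma(d(\mathcal{C}_m,\mathcal{X}\setminus\mathcal{C}_m))}{K_\sigma(\delta_l)}}.$$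
   Context: $[n]=\{1,\dots,n\}$; $\|\cdot\|$ is the Euclidean norm. For sets $S,U\subset\mathbb{R}^d$, $d(S,U)=\inf_{\mathbf{x}\in S,\mathbf{y}\in U}\|\mathbf{x}-\mathbf{y}\|$, with $d(S,\emptyset)=\infty$. A set $S$ is connected at distance $\delta$ if there is no partition of $S$ into $S_1,S_2$ with $d(S_1,S_2)>\delta$. The graph $(\mathcal{X},K_\sigma)$ has affinity matrix $\mathbf{A}_{ij}=K_\sigma(\|\mathbf{x}_i-\mathbf{x}_j\|)$ (including $i=j$), degree matrix $\mathbf{D}=\mathrm{diag}(\sum_j\mathbf{A}_{ij})$, and normalised Laplacian $\mathbf{L}_{\mathrm{N}}=\mathbf{I}-\mathbf{D}^{-1/2}\mathbf{A}\mathbf{D}^{-1/2}$. ''The eigenvectors'' means an orthonormal eigenbasis arranged as columns with eigenvalues in nondecreasing order. $\mathbf{U}_{i,1:k}$ denotes the first $k$ entries of row $i$. *)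

From HB Require Import structures.
From mathcomp Require Import all_boot all_order all_algebra.
From mathcomp Require Import all_classical all_reals.
From mathcomp Require Import ereal.

Set Implicit Arguments. Unset Strict Implicit. Unset Printing Implicit Defensive.
Import Order.TTheory GRing.Theory Num.Theory.
Local Open Scope ring_scope.
Local Open Scope classical_set_scope.

Section Defs.
Variable R : realType.

Definition eucl (d : nat) (v : 'rV[R]_d) : R :=
  Num.sqrt (\sum_(c < d) v 0 c ^+ 2).

(* d(S,U) = inf over pairs of indices, as an extended real;
   the infimum of the empty set is +oo, so d(S, emptyset) = +oo. *)
Definition setdist (n d : nat) (x : 'I_n -> 'rV[R]_d) (S U : {set 'I_n}) : \bar R :=
  ereal_inf [set e | exists i j, i \in S /\ j \in U /\ e = (eucl (x i - x j))%:E].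

Definition connected_at (n d : nat) (x : 'I_n -> 'rV[R]_d) (S : {set 'I_n}) (delta : R) : Prop :=
  forall S1 S2 : {set 'I_n}, S1 :|: S2 = S -> S1 :&: S2 = finset.set0 ->
    S1 != finset.set0 -> S2 != finset.set0 -> ~ (setdist x S1 S2 > delta%:E)%E.

Definition Ksig (K : R -> R) (sigma : R) (t : R) : R := K (t / sigma).

(* K_sigma extended to [0, +oo]: at +oo we take the limit of K at infinity,
   i.e. inf_{t >= 0} K t (K is non-increasing and positive). *)
Definition Ksig_ext (K : R -> R) (sigma : R) (t : \bar R) : R :=
  match t with
  | r%:E => Ksig K sigma r
  | _ => inf (K @` [set t : R | 0 <= t])
  end.

Definition affinity (n d : nat) (K : R -> R) (sigma : R) (x : 'I_n -> 'rV[R]_d) : 'M[R]_n :=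
  \matrix_(i, j) Ksig K sigma (eucl (x i - x j)).

Definition degmx (n : nat) (A : 'M[R]_n) : 'M[R]_n :=
  \matrix_(i, j) (if i == j then \sum_(l < n) A i l else 0).

Definition normLap (n : nat) (A : 'M[R]_n) : 'M[R]_n :=
  let Dm12 := \matrix_(i, j) (if i == j then (Num.sqrt (degmx A i i))^-1 else 0) in
  1%:M - Dm12 *m A *m Dm12.

Definition eigbasis (n : nat) (L U : 'M[R]_n) (lam : 'rV[R]_n) : Prop :=
  U^T *m U = 1%:M /\ L *m U = U *m diag_mx lam /\
  (forall a b : 'I_n, (a <= b)%N -> lam 0 a <= lam 0 b).

End Defs.

From HB Require Import structures.
From mathcomp Require Import all_boot all_order all_algebra.
From mathcomp Require Import all_classical all_reals.
From mathcomp Require Import ereal.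
From mathcomp Require Import ring lra.

Set Implicit Arguments.
Unset Strict Implicit.
Unset Printing Implicit Defensive.

Import Order.TTheory GRing.Theory Num.Theory.
Local Open Scope ring_scope.

(* Write [f_a = D^{-1/2} u_a] for the [a]-th eigenvector [u_a] of [L_N].  The
   quadratic form of [L_N] at [D^{1/2} f] is [1/2 sum_ij A_ij (f_i - f_j)^2], so
   the Dirichlet energy of [f_a] is [2 lam_a].  Every affinity across clusters is
   at most [eps = max_m K_sigma(d(C_m, X \ C_m))], hence the Rayleigh quotient of
   [L_N] on the [k]-dimensional span of the [D^{1/2} 1_{C_m}] is at most [2 n eps]
   and, by Courant-Fischer, [lam_a <= 2 n eps] for [a < k].  Inside [C_l],
   connectivity at distance [delta_l] yields a spanning tree of edges of length at
   most [delta_l], hence of affinity at least [K_sigma(delta_l)]; Cauchy-Schwarz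
   along its paths bounds [(f_a(i) - f_a(j))^2] by [(n - 1) 4 n eps / K_sigma(delta_l)].
   Summing over [a < k] and using [4 n (n - 1) <= n^3] gives the bound. *)

Lemma sqrrD_le_mul (R : realFieldType) (a b t B : R) : 0 <= t -> 0 <= B ->
  b ^+ 2 <= t * B -> (a + b) ^+ 2 <= (t + 1) * (a ^+ 2 + B).
Proof.
move=> t0 B0 hb; have [t_eq0|t_neq0] := eqVneq t 0.
  move: hb; rewrite t_eq0 mul0r add0r mul1r => b0.
  have -> : b = 0 by apply/eqP; rewrite -sqrf_eq0 eq_le b0 sqr_ge0.
  by rewrite addr0 lerDl.
have t_gt0 : 0 < t by rewrite lt0r t_neq0.
(* [2ab <= t a^2 + b^2 / t <= t a^2 + B] *)
have : 0 <= t * (t * a ^+ 2 - 2 * a * b + B) by have := sqr_ge0 (t * a - b); nra.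
rewrite pmulr_rge0 //; nra.
Qed.

Lemma map_bigmax_le (R : realDomainType) (I : Type) (r : seq I) (F : I -> R)
    (f : R -> R) : f 0 <= 0 ->
  f (\big[Num.max/0]_(i <- r) F i) <= \big[Num.max/0]_(i <- r) f (F i).
Proof.
move=> f0; elim/big_ind2: _ => // a a' b b' fa fb.
by rewrite maxEle le_max; case: ifP => _; rewrite ?fa ?fb ?orbT.
Qed.

Lemma card_ord_lt (n k : nat) : (#|[pred a : 'I_n | (a < k)%N]| <= k)%N.
Proof.
rewrite cardE -(size_map val) -[k in (_ <= k)%N](size_iota 0); apply: uniq_leq_size.
  by rewrite (map_inj_uniq val_inj) enum_uniq.
by move=> y /mapP[a]; rewrite mem_enum inE => ak ->; rewrite mem_iota.
Qed.

Lemma predn_mul4_le_cube (R : realDomainType) (n : nat) :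
  (n.-1)%:R * (4 * n%:R) <= n%:R ^+ 3 :> R.
Proof.
case: n => [|m] /=; first by rewrite mul0r expr0n.
(* [(m + 1)^3 - 4 m (m + 1) = (m + 1) (m - 1)^2] *)
rewrite -natr1; have := mulr_ge0 (ler0n R m) (sqr_ge0 (m%:R - 1 : R)); nra.
Qed.

Lemma eucl_ge0 (R : realType) d (v : 'rV[R]_d) : 0 <= eucl v.
Proof. exact: sqrtr_ge0. Qed.

Lemma euclN (R : realType) d (v : 'rV[R]_d) : eucl (- v) = eucl v.
Proof. by rewrite /eucl; congr Num.sqrt; apply: eq_bigr => c _; rewrite mxE sqrrN. Qed.

Lemma eucl0 (R : realType) d : eucl (0 : 'rV[R]_d) = 0.
Proof. by rewrite /eucl big1 ?sqrtr0 // => c _; rewrite mxE expr0n. Qed.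

Section QuadraticForm.
Variables (R : realType) (n : nat).

Definition qform (M : 'M[R]_n) (v : 'rV[R]_n) : R := (v *m M *m v^T) 0 0.

Definition degsqrt (A : 'M[R]_n) (i : 'I_n) : R := Num.sqrt (degmx A i i).

Lemma qformE (M : 'M[R]_n) (v : 'rV[R]_n) :
  qform M v = \sum_i \sum_j v 0 i * M i j * v 0 j.
Proof.
rewrite /qform mxE exchange_big /=; apply: eq_bigr => j _.
by rewrite !mxE mulr_suml.
Qed.

Lemma degmxE (A : 'M[R]_n) i : degmx A i i = \sum_j A i j.
Proof. by rewrite /degmx mxE eqxx. Qed.

Lemma normLapE (A : 'M[R]_n) i j :
  normLap A i j = (i == j)%:R - A i j / (degsqrt A i * degsqrt A j).
Proof.
rewrite /normLap; set Dm := \matrix_(_, _) _.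
have -> : Dm = diag_mx (\row_i (degsqrt A i)^-1).
  apply/matrixP => p q; rewrite /degsqrt !mxE.
  by case: eqP => [->|_] /=; rewrite ?mulr1n ?mulr0n.
rewrite mul_mx_diag mul_diag_mx !mxE eq_sym invfM.
by case: eqP => _; rewrite ?mulr1n ?mulr0n; ring.
Qed.

End QuadraticForm.

Section Eigenbasis.
Variables (R : realType) (n : nat) (L U : 'M[R]_n) (lam : 'rV[R]_n).
Hypothesis hU : eigbasis L U lam.

Lemma eigbasis_coordK (v : 'rV[R]_n) : v *m U *m U^T = v.
Proof. by rewrite -mulmxA; case: hU => /mulmx1C -> _; rewrite mulmx1. Qed.

Lemma sqnorm_eigbasis (v : 'rV[R]_n) :
  \sum_i v 0 i ^+ 2 = \sum_b (v *m U) 0 b ^+ 2.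
Proof.
have sqnormE (w : 'rV[R]_n) : \sum_i w 0 i ^+ 2 = (w *m w^T) 0 0.
  by rewrite mxE; apply: eq_bigr => i _; rewrite !mxE expr2.
by rewrite !sqnormE trmx_mul mulmxA eigbasis_coordK.
Qed.

Lemma qform_eigbasis (v : 'rV[R]_n) :
  qform L v = \sum_b lam 0 b * (v *m U) 0 b ^+ 2.
Proof.
have [UtU [LU _]] := hU; set w := v *m U.
have -> : qform L v = (w *m diag_mx lam *m w^T) 0 0.
  rewrite /qform -(eigbasis_coordK v) -/w trmx_mul trmxK.
  by rewrite -!mulmxA (mulmxA L) LU -mulmxA (mulmxA U^T) UtU mul1mx !mulmxA.
by rewrite mxE; apply: eq_bigr => b _; rewrite mul_mx_diag !mxE; ring.
Qed.

Lemma qform_eigvec (a : 'I_n) : qform L (row a U^T) = lam 0 a.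
Proof.
rewrite qform_eigbasis -row_mul; case: hU => -> _.
rewrite (bigD1 a) //= big1 ?addr0 => [|b /negbTE ba]; rewrite !mxE.
  by rewrite eqxx expr1n mulr1.
by rewrite eq_sym ba expr0n mulr0.
Qed.

(* Courant-Fischer: for [a < k] the [k]-dimensional row space of [G] meets the
   span of the eigenvectors [a, a+1, ...]. *)
Lemma eigenvalue_le_rayleigh (k : nat) (G : 'M[R]_(k, n)) (mu : R) :
  row_free G ->
  (forall al : 'rV[R]_k, qform L (al *m G) <= mu * \sum_i (al *m G) 0 i ^+ 2) ->
  forall a : 'I_n, (a < k)%N -> lam 0 a <= mu.
Proof.
move=> G_free G_mu a ak.
have [_ [_ lam_sorted]] := hU.
pose below_a := colsub (widen_ord (ltnW (ltn_ord a))) (G *m U).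
have : kermx below_a != 0.
  by rewrite -mxrank_eq0 mxrank_ker subn_eq0 -ltnNge (leq_ltn_trans (rank_leq_col _)).
case/rowV0Pn => al /sub_kermxP al_ker al_neq0.
set v := al *m G.
have w0 (b : 'I_n) : (b < a)%N -> (v *m U) 0 b = 0.
  move=> ba; have := congr1 (fun X : 'M[R]_(1, a) => X 0 (Ordinal ba)) al_ker.
  rewrite mulmx_colsub mxE mulmxA -/v.
  have -> : widen_ord (ltnW (ltn_ord a)) (Ordinal ba) = b by apply: val_inj.
  by move=> ->; rewrite mxE.
have N_gt0 : 0 < \sum_i v 0 i ^+ 2.
  have [i vi] : exists i, v 0 i != 0 by apply/rV0Pn; rewrite mulmx_free_eq0.
  have vi2 : 0 < v 0 i ^+ 2 by rewrite lt_def sqrf_eq0 vi sqr_ge0.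
  rewrite (bigD1 i) //= (lt_le_trans vi2) // lerDl.
  by apply: sumr_ge0 => j _; apply: sqr_ge0.
rewrite -(ler_pM2r N_gt0); apply: le_trans (G_mu al).
rewrite qform_eigbasis sqnorm_eigbasis mulr_sumr; apply: ler_sum => b _.
have [ba|ab] := ltnP b a; first by rewrite w0 // expr0n !mulr0.
by rewrite -/v ler_wpM2r ?sqr_ge0 ?lam_sorted.
Qed.

End Eigenbasis.

Section NormalisedLaplacian.
Variables (R : realType) (n : nat) (A : 'M[R]_n).
Hypothesis A_sym : forall i j, A i j = A j i.
Hypothesis A_ge0 : forall i j, 0 <= A i j.
Hypothesis A_diag_ge1 : forall i, 1 <= A i i.

Lemma degmx_ge1 i : 1 <= degmx A i i.
Proof.
rewrite degmxE (bigD1 i) //=; apply: le_trans (A_diag_ge1 i) _.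
by rewrite lerDl sumr_ge0.
Qed.

Lemma degsqrt_gt0 i : 0 < degsqrt A i.
Proof. by rewrite sqrtr_gt0 (lt_le_trans ltr01) ?degmx_ge1. Qed.

Lemma sqr_degsqrt i : degsqrt A i ^+ 2 = degmx A i i.
Proof. by rewrite sqr_sqrtr // ltW // (lt_le_trans ltr01) ?degmx_ge1. Qed.

Lemma qform_normLap (f : 'I_n -> R) :
  qform (normLap A) (\row_i (degsqrt A i * f i)) =
  2^-1 * \sum_i \sum_j A i j * (f i - f j) ^+ 2.
Proof.
set S1 := \sum_i \sum_j A i j * f i ^+ 2.
set S2 := \sum_i \sum_j A i j * (f i * f j).
have entry i j : degsqrt A i * f i * normLap A i j * (degsqrt A j * f j) =
    (i == j)%:R * (degmx A i i * f i ^+ 2) - A i j * (f i * f j).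
  have si := lt0r_neq0 (degsqrt_gt0 i); have sj := lt0r_neq0 (degsqrt_gt0 j).
  by rewrite normLapE -sqr_degsqrt; case: eqP => [<-|_] /=; field; rewrite ?si ?sj.
have -> : qform (normLap A) (\row_i (degsqrt A i * f i)) = S1 - S2.
  rewrite qformE /S1 /S2 -sumrB; apply: eq_bigr => i _.
  under eq_bigr do rewrite ![(\row_i _) 0 _]mxE entry.
  rewrite sumrB (bigD1 i) //= eqxx mul1r big1 ?addr0; last first.
    by move=> j /negbTE; rewrite eq_sym => ->; rewrite mul0r.
  by rewrite degmxE mulr_suml.
have S1_sym : \sum_i \sum_j A i j * f j ^+ 2 = S1.
  by rewrite exchange_big; apply: eq_bigr => i _; apply: eq_bigr => j _; rewrite A_sym.
have -> : \sum_i \sum_j A i j * (f i - f j) ^+ 2 = S1 + S1 - 2 * S2.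
  rewrite -{2}S1_sym /S1 /S2 mulr_sumr -big_split -sumrB /=; apply: eq_bigr => i _.
  by rewrite mulr_sumr -big_split -sumrB /=; apply: eq_bigr => j _; ring.
by field.
Qed.

Lemma dirichlet_eigvec (U : 'M[R]_n) (lam : 'rV[R]_n) :
  eigbasis (normLap A) U lam -> forall a : 'I_n,
  \sum_i \sum_j A i j * (U i a / degsqrt A i - U j a / degsqrt A j) ^+ 2 =
  2 * lam 0 a.
Proof.
move=> hU a; rewrite -(qform_eigvec hU).
have -> : row a U^T = \row_i (degsqrt A i * (U i a / degsqrt A i)).
  by apply/rowP => i; rewrite !mxE mulrCA divff ?mulr1 // lt0r_neq0 ?degsqrt_gt0.
by rewrite qform_normLap mulrA divff ?mul1r.
Qed.

Variables (k : nat) (c : 'I_n -> 'I_k) (eps : R).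
Hypothesis eps_ge0 : 0 <= eps.
Hypothesis A_eps : forall i j, c i != c j -> A i j <= eps.

Definition cluster_mx : 'M[R]_(k, n) :=
  \matrix_(m, i) ((c i == m)%:R * degsqrt A i).

Lemma cluster_mxE (al : 'rV[R]_k) i :
  (al *m cluster_mx) 0 i = degsqrt A i * al 0 (c i).
Proof.
rewrite mxE (bigD1 (c i)) //= big1 => [|m /negbTE cim]; rewrite !mxE.
  by rewrite eqxx mul1r addr0 mulrC.
by rewrite eq_sym cim mul0r mulr0.
Qed.

Lemma row_free_cluster_mx : (forall m, exists i, c i = m) -> row_free cluster_mx.
Proof.
move=> c_surj; apply: inj_row_free => al al0; apply/rowP => m.
have [i <-] := c_surj m; apply/eqP; rewrite mxE.
have := congr1 (fun v : 'rV_n => v 0 i) al0; rewrite /= cluster_mxE mxE.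
by move/eqP; rewrite mulf_eq0 gt_eqF ?degsqrt_gt0.
Qed.

Lemma qform_cluster_mx_le (al : 'rV[R]_k) :
  qform (normLap A) (al *m cluster_mx) <=
  2 * n%:R * eps * \sum_i (al *m cluster_mx) 0 i ^+ 2.
Proof.
set f := fun i => al 0 (c i).
have -> : al *m cluster_mx = \row_i (degsqrt A i * f i).
  by apply/rowP => i; rewrite cluster_mxE mxE.
rewrite qform_normLap; set T := \sum_i f i ^+ 2.
have pair_le i j : A i j * (f i - f j) ^+ 2 <= 2 * eps * (f i ^+ 2 + f j ^+ 2).
  have [cij|cij] := eqVneq (c i) (c j).
    by rewrite /f cij subrr expr0n mulr0 mulr_ge0 ?addr_ge0 ?sqr_ge0 ?mulr_ge0.
  have := A_eps cij; have := A_ge0 i j; have := sqr_ge0 (f i + f j).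
  have := sqr_ge0 (f i - f j); nra.
have sum_pairs : \sum_i \sum_j (f i ^+ 2 + f j ^+ 2) = 2 * n%:R * T.
  under eq_bigr do rewrite big_split /= sumr_const card_ord.
  by rewrite big_split /= sumrMnl sumr_const card_ord -/T -mulr_natr; ring.
have T_le : T <= \sum_i (degsqrt A i * f i) ^+ 2.
  apply: ler_sum => i _; rewrite exprMn sqr_degsqrt ler_peMl ?sqr_ge0 //.
  exact: degmx_ge1.
apply: (@le_trans _ _ (2^-1 * (2 * eps * (2 * n%:R * T)))).
  rewrite ler_pM2l ?invr_gt0 // -sum_pairs mulr_sumr.
  by apply: ler_sum => i _; rewrite mulr_sumr; apply: ler_sum => j _; apply: pair_le.
have -> : 2^-1 * (2 * eps * (2 * n%:R * T)) = 2 * n%:R * eps * T by field.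
apply: ler_wpM2l; first by rewrite !mulr_ge0 ?ler0n.
by rewrite (eq_bigr (fun i => (degsqrt A i * f i) ^+ 2)) // => i _; rewrite mxE.
Qed.

Lemma normLap_eigenvalue_le (U : 'M[R]_n) (lam : 'rV[R]_n) :
  eigbasis (normLap A) U lam -> (forall m, exists i, c i = m) ->
  forall a : 'I_n, (a < k)%N -> lam 0 a <= 2 * n%:R * eps.
Proof.
move=> hU c_surj; apply: (eigenvalue_le_rayleigh hU (row_free_cluster_mx c_surj)).
exact: qform_cluster_mx_le.
Qed.

End NormalisedLaplacian.

Section ShortEdges.
Variables (R : realType) (n d : nat) (x : 'I_n -> 'rV[R]_d).
Variables (C : {set 'I_n}) (dl : R).
Hypothesis C_conn : connected_at x C dl.

Lemma connected_at_short_edge (S : {set 'I_n}) :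
  S \subset C -> S != finset.set0 -> C :\: S != finset.set0 ->
  exists p q, [/\ p \in S, q \in C :\: S & eucl (x p - x q) <= dl].
Proof.
move=> SC S0 CS0; apply: contrapT => no_edge.
apply: (C_conn (S1 := S) (S2 := C :\: S)) => //.
- apply/setP => y; rewrite !inE.
  by case: (boolP (y \in S)) => //= /(fintype.subsetP SC) ->.
- by apply/setP => y; rewrite !inE; case: (y \in S).
pose mu := \big[Num.min/(dl + 1)]_(e | (e.1 \in S) && (e.2 \in C :\: S))
             eucl (x e.1 - x e.2).
have dl_lt_mu : dl < mu.
  apply: lt_bigmin => [|[p q] /andP[pS qCS]]; first by rewrite ltrDl.
  by rewrite ltNge; apply/negP => short; apply: no_edge; exists p, q.
apply: (lt_le_trans (y := mu%:E)); rewrite ?lte_fin //.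
apply/ereal_infP => _ [p [q [pS [qCS ->]]]]; rewrite lee_fin.
by apply: (bigmin_le_cond _ (j := (p, q))) => /=; rewrite pS.
Qed.

Variables (f : 'I_n -> R) (i : 'I_n).

Let sqdiff (e : 'I_n * 'I_n) := (f e.1 - f e.2) ^+ 2.

Let spans (S : {set 'I_n}) (E : {set 'I_n * 'I_n}) :=
  (forall e, e \in E -> e.2 \in S /\ eucl (x e.1 - x e.2) <= dl) /\
  forall p, p \in S -> (f p - f i) ^+ 2 <= (#|S|.-1)%:R * \sum_(e in E) sqdiff e.

Lemma spans_grow (S : {set 'I_n}) (E : {set 'I_n * 'I_n}) :
  i \in S -> S \subset C -> C :\: S != finset.set0 -> spans S E ->
  exists q E', q \in C :\: S /\ spans (q |: S) E'.
Proof.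
move=> iS SC CS0 [E_short E_bound].
have S0 : S != finset.set0 by apply/set0Pn; exists i.
have [p [q [pS qCS pq_short]]] := connected_at_short_edge SC S0 CS0.
exists q, ((p, q) |: E); split => //.
move: (qCS); rewrite inE => /andP[qS _].
have pqE : (p, q) \notin E by apply: contra qS => /E_short[].
split=> [e|y].
  rewrite !inE => /predU1P[-> | /E_short[eS e_short]]; first by rewrite eqxx.
  by rewrite eS orbT.
have t_ge0 : 0 <= (#|S|.-1)%:R :> R := ler0n _ _.
have B_ge0 : 0 <= \sum_(e in E) sqdiff e by apply: sumr_ge0 => e _; apply: sqr_ge0.
have g_ge0 : 0 <= sqdiff (p, q) := sqr_ge0 _.
have S_gt0 : (0 < #|S|)%N by rewrite card_gt0.
rewrite cardsU1 qS add1n /= big_setU1 //= -[#|S|](prednK S_gt0) -natr1.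
rewrite !inE => /predU1P[-> | yS].
  rewrite (_ : f q - f i = (f q - f p) + (f p - f i)); last by rewrite addrA subrK.
  have -> : sqdiff (p, q) = (f q - f p) ^+ 2 by rewrite /sqdiff -sqrrN opprB.
  by apply: sqrrD_le_mul => //; apply: E_bound.
by apply: le_trans (E_bound y yS) _; nra.
Qed.

Lemma connected_at_sqr_diff_le : i \in C ->
  exists E : {set 'I_n * 'I_n},
    (forall e, e \in E -> eucl (x e.1 - x e.2) <= dl) /\
    forall p, p \in C -> (f p - f i) ^+ 2 <= (#|C|.-1)%:R * \sum_(e in E) sqdiff e.
Proof.
move=> iC.
suff grow m S E : #|C :\: S| = m -> i \in S -> S \subset C -> spans S E ->
    exists E, spans C E.
  have span_i : spans [set i] finset.set0.
    by split=> [e|p]; rewrite inE // => /eqP ->; rewrite subrr expr0n cards1 mul0r.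
  have [|E [E_short E_bound]] := grow _ _ _ erefl (finset.set11 i) _ span_i.
    by rewrite finset.sub1set.
  by exists E; split=> // e /E_short[].
elim: m S E => [|m IH] S E CSm iS SC span_SE.
  suff -> : C = S by exists E.
  apply/eqP; rewrite finset.eqEsubset SC andbT.
  by rewrite -finset.setD_eq0 -finset.cards_eq0 CSm.
have CS0 : C :\: S != finset.set0 by rewrite -card_gt0 CSm.
have [q [E' [qCS span_qSE']]] := spans_grow iS SC CS0 span_SE.
apply: (IH (q |: S) E') => //; last 2 first.
- by rewrite !inE iS orbT.
- by rewrite finset.subUset finset.sub1set SC andbT; case/setDP: qCS.
by move: CSm; rewrite (cardsD1 q) qCS add1n finset.setUC -finset.setDDl => -[].
Qed.

End ShortEdges.

Section AffinityGraph.
Variables (R : realType) (K : R -> R).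
Hypothesis K_noninc : forall s t : R, 0 <= s -> s <= t -> K t <= K s.
Hypothesis K_pos : forall t : R, 0 <= t -> 0 < K t.
Hypothesis K0 : K 0 = 1.
Variables (sigma : R) (n d : nat) (x : 'I_n -> 'rV[R]_d).
Hypothesis sigma_pos : 0 < sigma.

Lemma Ksig_gt0 t : 0 <= t -> 0 < Ksig K sigma t.
Proof. by move=> t0; apply: K_pos; rewrite divr_ge0 // ltW. Qed.

Lemma Ksig_noninc s t : 0 <= s -> s <= t -> Ksig K sigma t <= Ksig K sigma s.
Proof.
by move=> s0 st; apply: K_noninc; rewrite ?divr_ge0 ?ler_pM2r ?invr_gt0 // ltW.
Qed.

Local Notation A := (affinity K sigma x).

Lemma affinityE i j : A i j = Ksig K sigma (eucl (x i - x j)).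
Proof. by rewrite mxE. Qed.

Lemma affinity_sym i j : A i j = A j i.
Proof. by rewrite !affinityE -euclN opprB. Qed.

Lemma affinity_gt0 i j : 0 < A i j.
Proof. by rewrite affinityE Ksig_gt0 ?eucl_ge0. Qed.

Lemma affinity_diag i : A i i = 1.
Proof. by rewrite affinityE subrr eucl0 /Ksig mul0r K0. Qed.

Lemma affinity_le_Ksig_ext (C : {set 'I_n}) i j : i \in C -> j \in ~: C ->
  A i j <= Ksig_ext K sigma (setdist x C (~: C)).
Proof.
move=> iC jC.
have dist_le : (setdist x C (~: C) <= (eucl (x i - x j))%:E)%E.
  by apply: ereal_inf_lbound; exists i, j.
have dist_ge0 : (0 <= setdist x C (~: C))%E.
  by apply/ereal_infP => _ [p [q [_ [_ ->]]]]; rewrite lee_fin eucl_ge0.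
move: dist_le dist_ge0; case: (setdist x C (~: C)) => [r| |] //=.
by rewrite !lee_fin affinityE => ? ?; apply: Ksig_noninc.
Qed.

Variables (U : 'M[R]_n) (lam : 'rV[R]_n) (k : nat) (c : 'I_n -> 'I_k) (eps : R).
Hypothesis hU : eigbasis (normLap A) U lam.
Hypothesis c_surj : forall m, exists i, c i = m.
Hypothesis eps_ge0 : 0 <= eps.
Hypothesis A_eps : forall i j, c i != c j -> A i j <= eps.

Lemma eigvec_sqr_diff_le (C : {set 'I_n}) (dl : R) :
  connected_at x C dl -> 0 <= dl ->
  forall i j (a : 'I_n), i \in C -> j \in C -> (a < k)%N ->
  ((degsqrt A i)^-1 * U i a - (degsqrt A j)^-1 * U j a) ^+ 2 <=
  (n.-1)%:R * (4 * n%:R * eps / Ksig K sigma dl).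
Proof.
move=> C_conn dl_ge0 i j a iC jC ak.
pose f p := U p a / degsqrt A p; pose g (e : 'I_n * 'I_n) := (f e.1 - f e.2) ^+ 2.
have [E [E_short E_bound]] := connected_at_sqr_diff_le C_conn f iC.
have Kdl_gt0 := Ksig_gt0 dl_ge0.
have A_ge0 p q : 0 <= A p q by apply: ltW; apply: affinity_gt0.
have A_diag_ge1 p : 1 <= A p p by rewrite affinity_diag.
have energy_E : Ksig K sigma dl * \sum_(e in E) g e <= \sum_e A e.1 e.2 * g e.
  rewrite mulr_sumr [X in _ <= X](bigID (mem E)) /= ler_wpDr ?sumr_ge0 //.
    by move=> e _; rewrite mulr_ge0 ?sqr_ge0.
  apply: ler_sum => e eE; rewrite ler_wpM2r ?sqr_ge0 // affinityE.
  by apply: Ksig_noninc; rewrite ?eucl_ge0 ?E_short.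
have energy_all : \sum_e A e.1 e.2 * g e <= 4 * n%:R * eps.
  rewrite -(pair_bigA _ (fun p q => A p q * g (p, q))) /=.
  rewrite (dirichlet_eigvec affinity_sym A_ge0 A_diag_ge1 hU).
  have := normLap_eigenvalue_le affinity_sym A_ge0 A_diag_ge1 eps_ge0 A_eps hU
    c_surj ak.
  lra.
have E_le : \sum_(e in E) g e <= 4 * n%:R * eps / Ksig K sigma dl.
  by rewrite ler_pdivlMr // mulrC (le_trans energy_E).
have C_le : (#|C|.-1 <= n.-1)%N.
  by rewrite -!subn1 leq_sub2r // -[n in (_ <= n)%N]card_ord max_card.
rewrite !(mulrC _^-1) -sqrrN opprB; apply: le_trans (E_bound j jC) _.
by rewrite ler_pM ?ler_nat ?sumr_ge0 // => e _; apply: sqr_ge0.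
Qed.

Lemma eigvec_rows_sqr_dist_le (C : {set 'I_n}) (dl : R) :
  connected_at x C dl -> 0 <= dl -> forall i j, i \in C -> j \in C ->
  \sum_(a < n | (a < k)%N)
     ((degsqrt A i)^-1 * U i a - (degsqrt A j)^-1 * U j a) ^+ 2 <=
  n%:R ^+ 3 * k%:R * (eps / Ksig K sigma dl).
Proof.
move=> C_conn dl_ge0 i j iC jC.
apply: le_trans (ler_sum _ (fun a => eigvec_sqr_diff_le C_conn dl_ge0 iC jC)) _.
rewrite sumr_const -[X in X <= _]mulr_natl.
have te_ge0 : 0 <= eps / Ksig K sigma dl by rewrite divr_ge0 // ltW // Ksig_gt0.
have card_le := card_ord_lt n k; rewrite -(ler_nat R) in card_le.
have Y_ge0 : 0 <= (n.-1)%:R * (4 * n%:R) :> R by rewrite !mulr_ge0 ?ler0n.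
have := ler_pM (ler0n _ _) (mulr_ge0 Y_ge0 te_ge0) card_le
  (ler_wpM2r te_ge0 (predn_mul4_le_cube R n)).
lra.
Qed.

End AffinityGraph.

Theorem lemma2 (R : realType) (K : R -> R)
  (K_noninc : forall s t : R, 0 <= s -> s <= t -> K t <= K s)
  (K_pos : forall t : R, 0 <= t -> 0 < K t)
  (K0 : K 0 = 1)
  (sigma : R) (sigma_pos : 0 < sigma)
  (n d k : nat) (x : 'I_n -> 'rV[R]_d) (x_inj : injective x)
  (c : 'I_n -> 'I_k) (c_surj : forall l : 'I_k, exists i, c i = l)
  (delta : 'I_k -> R) (delta_ge0 : forall l, 0 <= delta l)
  (conn : forall l : 'I_k, connected_at x [set i | c i == l] (delta l))
  (U : 'M[R]_n) (lam : 'rV[R]_n)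
  (hU : eigbasis (normLap (affinity K sigma x)) U lam) :
  let D := degmx (affinity K sigma x) in
  forall (i j : 'I_n) (l : 'I_k), c i = l -> c j = l ->
    Num.sqrt (\sum_(a < n | (a < k)%N)
       ((Num.sqrt (D i i))^-1 * U i a - (Num.sqrt (D j j))^-1 * U j a) ^+ 2)
    <= \big[Num.max/0]_(m < k)
         (n%:R * Num.sqrt n%:R * Num.sqrt k%:R *
          Num.sqrt (Ksig_ext K sigma (setdist x [set i | c i == m] (~: [set i | c i == m]))
                    / Ksig K sigma (delta l))).
Proof.
move=> D i j l ci cj.
pose Kext m := Ksig_ext K sigma (setdist x [set p | c p == m] (~: [set p | c p == m])).
pose eps := \big[Num.max/0]_(m < k) Kext m.
have A_eps p q : c p != c q -> affinity K sigma x p q <= eps.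
  move=> cpq; apply: le_trans (le_bigmax _ Kext (c p)).
  by apply: (affinity_le_Ksig_ext K_noninc x sigma_pos); rewrite !inE // eq_sym.
have [iC jC] : i \in [set p | c p == l] /\ j \in [set p | c p == l].
  by rewrite !inE ci cj.
have eps_ge0 : 0 <= eps := bigmax_ge_id _ _ _ _.
have Kd_ge0 : 0 <= Ksig K sigma (delta l) := ltW (Ksig_gt0 K_pos sigma_pos (delta_ge0 l)).
have sum_le := eigvec_rows_sqr_dist_le K_noninc K_pos K0 sigma_pos hU c_surj
  eps_ge0 A_eps (conn l) (delta_ge0 l) iC jC.
pose Phi t :=
  n%:R * Num.sqrt n%:R * Num.sqrt k%:R * Num.sqrt (t / Ksig K sigma (delta l)).
apply: le_trans (map_bigmax_le _ Kext (f := Phi) _); last first.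
  by rewrite /Phi mul0r sqrtr0 mulr0.
have Phi_ge0 : 0 <= Phi eps by rewrite /Phi !mulr_ge0 ?sqrtr_ge0.
rewrite -/eps -(ger0_norm Phi_ge0) -sqrtr_sqr ler_wsqrtr // (le_trans sum_le) //.
by rewrite /Phi !exprMn !sqr_sqrtr ?ler0n ?divr_ge0 // -exprSr.
Qed.
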